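(* If $G$ is a diamond-weakly modular graph, then $G$ is weakly modular, and whenever $G$ contains an induced subgraph isomorphic to $C_5$, to $W_4^-$, or to the house, there exists a vertex of $G$ adjacent to all five vertices of that induced subgraph.
   Context: All graphs are finite, simple and connected; $d$ is the shortest-path distance. $C_5$ is the 5-cycle; $W_4$ is the 4-wheel (a 4-cycle plus a central vertex adjacent to all cycle vertices) and $W_4^-$ is $W_4$ with one edge between the center and a cycle vertex removed; the house is the 5-cycle with one chord (a 4-cycle with a triangle glued on one edge). Triangle condition $(TC)$: for any three vertices $u,v,w$ with $1=d(v,w)<d(v,u)=d(u,w)$ there is a common neighbor $z$ of $v,w$ with $d(u,z)=d(u,v)-1$. Quadrangle condition $(QC)$: for any four vertices $u,v,w,y$ with $d(v,y)=d(w,y)=1$ and $2=d(v,w)\le d(u,v)=d(u,w)=d(u,y)-1$, there exists a common neighbor $z$ of $v$ and $w$ with $d(u,z)=d(u,v)-1$. Weakly modular means $(TC)$ and $(QC)$. Triangle diamond condition $(TDC)$: for any three vertices $u,v,w$ with $1=d(v,w)<d(u,v)=d(u,w)$, there exists a common neighbor $z$ of $v$ and $w$ with $d(u,z)=d(u,v)-1$ such that $z$ is adjacent to every vertex $x$ with $d(x,v)=1$, $d(u,x)=d(u,v)-1$ and to every vertex $y$ with $d(y,w)=1$, $d(u,y)=d(u,w)-1$. Diamond-weakly modular means $(QC)$ and $(TDC)$. *)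

From mathcomp Require Import all_boot.
Set Implicit Arguments. Unset Strict Implicit. Unset Printing Implicit Defensive.

Definition simple_connected_graph (T : finType) (e : rel T) : Prop :=
  [/\ symmetric e, irreflexive e & forall x y : T, connect e x y].

Fixpoint ball (T : finType) (e : rel T) (n : nat) (x : T) : {set T} :=
  match n with
  | 0 => [set x]
  | n'.+1 => ball e n' x :|: [set z | [exists y in ball e n' x, e y z]]
  end.

(* Shortest-path distance: least n with y in ball n x (for a connected
   graph this n is < #|T|). *)
Definition dist (T : finType) (e : rel T) (x y : T) : nat :=
  find (fun n => y \in ball e n x) (iota 0 #|T|).

Section Conditions.
Variables (T : finType) (e : rel T).
Local Notation d := (dist e).

Definition TC : Prop :=
  forall u v w : T, 1 = d v w -> d v w < d v u -> d v u = d u w ->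
  exists z, [/\ e v z, e w z & d u z = d u v - 1].

Definition QC : Prop :=
  forall u v w y : T, d v y = 1 -> d w y = 1 ->
  2 = d v w -> d v w <= d u v -> d u v = d u w -> d u w = d u y - 1 ->
  exists z, [/\ e v z, e w z & d u z = d u v - 1].

Definition TDC : Prop :=
  forall u v w : T, 1 = d v w -> d v w < d u v -> d u v = d u w ->
  exists z, [/\ e v z, e w z, d u z = d u v - 1,
    (forall x, x != z -> d x v = 1 -> d u x = d u v - 1 -> e z x) &
    (forall y, y != z -> d y w = 1 -> d u y = d u w - 1 -> e z y)].

Definition weakly_modular : Prop := TC /\ QC.
Definition diamond_weakly_modular : Prop := QC /\ TDC.

Definition induced_copy (H : rel 'I_5) (f : 'I_5 -> T) : Prop :=
  injective f /\ forall i j, e (f i) (f j) = H i j.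

End Conditions.

Definition edge_of (E : seq (nat * nat)) : rel 'I_5 :=
  fun i j => ((i : nat, j : nat) \in E) || ((j : nat, i : nat) \in E).

Definition C5 : rel 'I_5 := edge_of [:: (0,1); (1,2); (2,3); (3,4); (4,0)].
(* W4^-: 4-cycle 0-1-2-3-0, center 4 adjacent to 0,1,2 (edge 4-3 removed) *)
Definition W4minus : rel 'I_5 :=
  edge_of [:: (0,1); (1,2); (2,3); (3,0); (4,0); (4,1); (4,2)].
Definition house : rel 'I_5 :=
  edge_of [:: (0,1); (1,2); (2,3); (3,0); (4,0); (4,1)].

(* An induced C5, W4^- or house contains an edge vw and a vertex u at
   distance 2 from both v and w.  TDC then yields a common neighbour z of u,
   v, w that is moreover adjacent to every other common neighbour of u and v
   or of u and w; in each of the three graphs these common neighbours are the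
   remaining two vertices.  Weak modularity is immediate: TC is TDC without
   its adjacency clauses, up to the symmetry of the distance. *)
From mathcomp Require Import all_boot.
Set Implicit Arguments. Unset Strict Implicit. Unset Printing Implicit Defensive.

Lemma uniq_size_le_card (T : finType) (s : seq T) : uniq s -> size s <= #|T|.
Proof. by move/card_uniqP <-; exact: max_card. Qed.

Section Balls.
Variables (T : finType) (e : rel T).

Lemma in_ball0 x y : (y \in ball e 0 x) = (y == x).
Proof. by rewrite inE. Qed.

Lemma in_ballS n x y :
  (y \in ball e n.+1 x) = (y \in ball e n x) || [exists z in ball e n x, e z y].
Proof. by rewrite /= !inE. Qed.

Lemma in_ball1 x y : (y \in ball e 1 x) = (y == x) || e x y.
Proof.
rewrite in_ballS in_ball0; congr (_ || _).
apply/existsP/idP => [[z /andP[]]|exy]; first by rewrite in_ball0 => /eqP ->.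
by exists x; rewrite in_ball0 eqxx.
Qed.

Lemma mem_ball_path n x y :
  y \in ball e n x <-> exists2 p, path e x p & (last x p == y) && (size p <= n).
Proof.
elim: n y => [|n IHn] y.
  rewrite in_ball0; split=> [/eqP ->|[[|z p] _ /andP[/eqP <- //]]].
  by exists [::]; rewrite /= ?eqxx.
rewrite in_ballS; split.
  case/orP => [/IHn[p ep /andP[lp sp]]|/existsP[z /andP[/IHn[p ep /andP[lp sp]]]]].
    by exists p => //; rewrite lp ltnW.
  move=> ezy; exists (rcons p y); first by rewrite rcons_path ep (eqP lp).
  by rewrite last_rcons size_rcons eqxx ltnS.
case=> p; case/lastP: p => [_ sy|p z].
  by apply/orP; left; apply/IHn; exists [::].
rewrite rcons_path last_rcons size_rcons => /andP[ep ez] /andP[/eqP <- sp].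
apply/orP; right; apply/existsP; exists (last x p); rewrite ez andbT.
by apply/IHn; exists p; rewrite ?eqxx.
Qed.

Lemma ball_sym n x y : symmetric e -> y \in ball e n x -> x \in ball e n y.
Proof.
move=> sym /mem_ball_path[p ep /andP[/eqP <- sp]]; apply/mem_ball_path.
exists (rev (belast x p)).
  by rewrite rev_path (@eq_path _ _ e) // => a b; exact: sym.
rewrite -(last_cons x) -rev_rcons -lastI rev_cons last_rcons.
by rewrite size_rev size_belast eqxx.
Qed.

End Balls.

Section Distance.
Variables (T : finType) (e : rel T).
Local Notation d := (dist e).

Lemma dist_le_card x y : d x y <= #|T|.
Proof. by rewrite /dist -[X in _ <= X](size_iota 0) find_size. Qed.

Lemma mem_ball_dist x y : d x y < #|T| -> y \in ball e (d x y) x.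
Proof.
rewrite /dist => lt_dT.
have hasT : has (fun n => y \in ball e n x) (iota 0 #|T|).
  by rewrite has_find size_iota.
by have := nth_find 0 hasT; rewrite nth_iota.
Qed.

Lemma notin_ball_lt_dist k x y : k < d x y -> y \notin ball e k x.
Proof.
move=> lt_kd; have lt_kT := leq_trans lt_kd (dist_le_card x y).
by have := before_find 0 lt_kd; rewrite nth_iota // => ->.
Qed.

Lemma distE n x y :
  n < #|T| -> y \in ball e n x -> (forall k, k < n -> y \notin ball e k x) ->
  d x y = n.
Proof.
move=> lt_nT yn ykn; apply/eqP; rewrite eqn_leq.
case: ltnP => [lt_nd|_]; first by rewrite (negbTE (notin_ball_lt_dist lt_nd)) in yn.
case: ltnP => // lt_dn.
by have := mem_ball_dist (ltn_trans lt_dn lt_nT); rewrite (negbTE (ykn _ lt_dn)).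
Qed.

Lemma distxx x : d x x = 0.
Proof. by apply: distE; rewrite ?in_ball0 // (uniq_size_le_card (s := [:: x])). Qed.

Hypotheses (sym_e : symmetric e) (irr_e : irreflexive e).

Lemma dist_sym x y : d x y = d y x.
Proof. by apply: eq_find => n; apply/idP/idP; apply: ball_sym. Qed.

Lemma dist1P x y : reflect (d x y = 1) (e x y).
Proof.
have ne_xy : e x y -> x != y by apply: contraTneq => ->; rewrite irr_e.
apply: (iffP idP) => [exy|dxy1].
  apply: distE; rewrite ?in_ball1 ?exy ?orbT //.
    by rewrite (uniq_size_le_card (s := [:: x; y])) //= inE ne_xy.
  by case=> // _; rewrite in_ball0 eq_sym ne_xy.
have xy : x != y by apply: contra_eqN dxy1 => /eqP ->; rewrite distxx.
have lt1T : 1 < #|T| by rewrite (uniq_size_le_card (s := [:: x; y])) //= inE xy.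
by have := @mem_ball_dist x y; rewrite dxy1 in_ball1 eq_sym (negbTE xy) => /(_ lt1T).
Qed.

Lemma dist2 x m y : x != y -> ~~ e x y -> e x m -> e m y -> d x y = 2.
Proof.
move=> xy nexy exm emy.
have xm : x != m by apply: contraTneq exm => ->; rewrite irr_e.
have my : m != y by apply: contraTneq emy => ->; rewrite irr_e.
apply: distE.
- by rewrite (uniq_size_le_card (s := [:: x; m; y])) //= !inE negb_or xm xy my.
- by rewrite in_ballS; apply/orP; right; apply/existsP; exists m; rewrite in_ball1 exm orbT.
- by case=> [|[|//]] _; rewrite ?in_ball0 ?in_ball1 eq_sym (negbTE xy) ?(negbTE nexy).
Qed.

End Distance.

Local Notation i0 := (@Ordinal 5 0 isT).
Local Notation i1 := (@Ordinal 5 1 isT).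
Local Notation i2 := (@Ordinal 5 2 isT).
Local Notation i3 := (@Ordinal 5 3 isT).
Local Notation i4 := (@Ordinal 5 4 isT).

Lemma forall_I5 (P : 'I_5 -> Prop) :
  P i0 -> P i1 -> P i2 -> P i3 -> P i4 -> forall i, P i.
Proof.
by move=> P0 P1 P2 P3 P4 [[|[|[|[|[|i]]]]] lt_i5] //;
  rewrite (bool_irrelevance lt_i5 isT).
Qed.

Section DiamondWeaklyModular.
Variables (T : finType) (e : rel T).
Hypotheses (sym_e : symmetric e) (irr_e : irreflexive e) (tdc : TDC e).
Local Notation d := (dist e).

Lemma TDC_TC : TC e.
Proof.
move=> u v w dvw1 lt_vw_vu dvu.
rewrite (dist_sym sym_e v u) in lt_vw_vu dvu.
by have [z [evz ewz duz _ _]] := tdc dvw1 lt_vw_vu dvu; exists z.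
Qed.

Lemma TDC_apex u v w : e v w -> d u v = 2 -> d u w = 2 ->
  exists z, [/\ e z u, e z v, e z w &
    forall x, x != z -> e u x -> e v x || e w x -> e z x].
Proof.
move=> evw duv duw.
have dvw : d v w = 1 by apply/(dist1P irr_e).
have [||z [evz ewz duz zNv zNw]] := tdc (u := u) (esym dvw);
  rewrite ?duv ?duw ?dvw //.
exists z; rewrite -?[e z _]sym_e; split=> //.
  by apply/(dist1P irr_e); rewrite duz duv.
move=> x xz /(dist1P irr_e) dux /orP[evx|ewx].
  by apply: zNv; rewrite ?dux ?duv //; apply/(dist1P irr_e); rewrite sym_e.
by apply: zNw; rewrite ?dux ?duw //; apply/(dist1P irr_e); rewrite sym_e.
Qed.

Lemma induced_dist2 H f i m j : induced_copy e H f ->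
  i != j -> ~~ H i j -> H i m -> H m j -> d (f i) (f j) = 2.
Proof. by case=> f_inj fE; rewrite -(inj_eq f_inj) -!fE; apply: dist2. Qed.

Lemma C5_dominated f : induced_copy e C5 f -> exists z, forall i, e z (f i).
Proof.
move=> copy; have [f_inj fE] := copy.
have [|||z [ez0 ez2 ez3 zN]] := TDC_apex (u := f i0) (v := f i2) (w := f i3).
- by rewrite fE.
- exact: (induced_dist2 (m := i1) copy).
- exact: (induced_dist2 (m := i4) copy).
have nz1 : f i1 != z by apply: contraTneq ez3 => <-; rewrite fE.
have nz4 : f i4 != z by apply: contraTneq ez2 => <-; rewrite fE.
by exists z; apply: forall_I5 => //; apply: zN; rewrite ?fE.
Qed.

Lemma W4minus_dominated f :
  induced_copy e W4minus f -> exists z, forall i, e z (f i).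
Proof.
move=> copy; have [f_inj fE] := copy.
have [|||z [ez3 ez1 ez4 zN]] := TDC_apex (u := f i3) (v := f i1) (w := f i4).
- by rewrite fE.
- exact: (induced_dist2 (m := i0) copy).
- exact: (induced_dist2 (m := i0) copy).
(* f i0 and f i2 are both adjacent to f i3, f i1 and f i4, so either could
   be z; but z would then be adjacent to the other one, and they are not. *)
have nz0 : f i0 != z.
  apply/eqP => z0; have := zN (f i2).
  by rewrite -z0 !fE (inj_eq f_inj) => /(_ isT isT isT).
have nz2 : f i2 != z.
  apply/eqP => z2; have := zN (f i0).
  by rewrite -z2 !fE (inj_eq f_inj) => /(_ isT isT isT).
by exists z; apply: forall_I5 => //; apply: zN; rewrite ?fE.
Qed.

Lemma house_dominated f : induced_copy e house f -> exists z, forall i, e z (f i).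
Proof.
move=> copy; have [f_inj fE] := copy.
have [|||z [ez4 ez2 ez3 zN]] := TDC_apex (u := f i4) (v := f i2) (w := f i3).
- by rewrite fE.
- exact: (induced_dist2 (m := i1) copy).
- exact: (induced_dist2 (m := i0) copy).
have nz0 : f i0 != z by apply: contraTneq ez2 => <-; rewrite fE.
have nz1 : f i1 != z by apply: contraTneq ez3 => <-; rewrite fE.
by exists z; apply: forall_I5 => //; apply: zN; rewrite ?fE.
Qed.

End DiamondWeaklyModular.

Theorem proposition1 (T : finType) (e : rel T) :
  simple_connected_graph e ->
  diamond_weakly_modular e ->
  weakly_modular e /\
  (forall (H : rel 'I_5) (f : 'I_5 -> T),
     (H = C5 \/ H = W4minus \/ H = house) ->
     induced_copy e H f ->
     exists v : T, forall i : 'I_5, e v (f i)).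
Proof.
case=> sym_e irr_e _ [qc tdc]; split; first by split=> //; exact: TDC_TC.
move=> H f [|[|]] ->.
- exact: C5_dominated.
- exact: W4minus_dominated.
- exact: house_dominated.
Qed.
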